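(* In the setting below, let $e,f\in G_0$ with $T_e\cap S_f\neq\emptyset$, and let $n_{e,f}=|T_e\cap S_f|=|\{g\in G: r(g)=e,\ d(g)=f\}|$. Then $$B_{e,f}=\bigoplus_{g\in G_e,\ l\in T_e\cap S_f}E_g\delta_g\#v_l\ \cong\ M_{n_{e,f}}(E_e)$$ as unital $K$-algebras, where $B_{e,f}$ has identity $1_e\delta_e\#\sum_{l\in T_e\cap S_f}v_l$.
   Context: Groupoid conventions. A groupoid is a small category with all morphisms invertible, regarded as the set $G$ of morphisms. For $g\in G$ we have $d(g)=g^{-1}g$ and $r(g)=gg^{-1}$. The product $gh$ is defined iff $d(g)=r(h)$, and then $d(gh)=d(h)$, $r(gh)=r(g)$. $G^2=\{(g,h):d(g)=r(h)\}$, and $G_0$ is the set of identities. For $e\in G_0$: - $G_e=\{g: d(g)=r(g)=e\}$; - $S_e=\{g\in G: d(g)=e\}$; - $T_e=\{g\in G: r(g)=e\}$. Actions. An action of $G$ on a ring $R$ is a pair $\beta=(\{E_g\},\{\beta_g\})$ where each $E_g=E_{r(g)}$ is an ideal of $R$, each $\beta_g:E_{g^{-1}}\to E_g$ is a ring isomorphism, $\beta_e=\mathrm{id}$ for $e\in G_0$, and $\beta_g\beta_h=\beta_{gh}$ on $E_{h^{-1}}$ for $(g,h)\in G^2$. Skew groupoid ring. $R\star_\beta G=\bigoplus_{g\in G}E_g\delta_g$ (the $\delta_g$ are formal symbols), with $(x\delta_g)(y\delta_h)=x\beta_g(y)\delta_{gh}$ if $(g,h)\in G^2$ and $0$ otherwise,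 for $x\in E_g$, $y\in E_h$. $KG^*$. The free $K$-module with basis $\{v_g\}_{g\in G}$, with $v_gv_h=\delta_{g,h}v_g$ and identity $\sum_g v_g$. Weak smash product. For a unital $G$-graded algebra $A=\bigoplus A_g$ (with $A_gA_h\subseteq A_{gh}$ if $(g,h)\in G^2$, and $0$ otherwise), $KG^*$ acts by $v_h\cdot a=a_h$ (the $h$-component). $A\#KG^*=A\otimes_K KG^*$ with $(a\#v_g)(b\#v_h)=a(v_{gh^{-1}}\cdot b)\#v_h$ if $d(g)=d(h)$, and $0$ otherwise. Setting. $K$ is a commutative unital ring and $G$ is a finite groupoid. $R$ is a not necessarily unital $K$-algebra with an action $\beta$ of $G$ (by $K$-linear maps) such that each $E_e$, $e\in G_0$, has an identity element $1_e$; put $1_g:=1_{r(g)}$, the identity of $E_g$. Then $R\star_\beta G$ is a unital $K$-algebra with identity $\sum_{e\in G_0}1_e\delta_e$. It is $G$-graded with $g$-component $E_g\delta_g$, so that $v_k\cdot(a_g\delta_g)=\delta_{k,g}a_g\delta_g$. Let $B=(R\star_\beta G)\#KG^*=\bigoplus_{g,h\in G}E_g\delta_g\#v_h$. $M_n(X)$ denotes the $n\times n$ matrix algebra over $X$. *)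

From HB Require Import structures.
From mathcomp Require Import all_boot all_order all_algebra.
Set Implicit Arguments. Unset Strict Implicit. Unset Printing Implicit Defensive.
Import GRing.Theory.
Local Open Scope ring_scope.

(* A finite groupoid, regarded as its (finite) set G of morphisms, with
   source d, range r, inverse inv and composition mul (mul g h is only
   meaningful when d g = r h).  The identities G_0 are the e with d e = e. *)
Record groupoid (G : finType) (d r inv : G -> G) (mul : G -> G -> G) : Prop := {
  gd_dd : forall g, d (d g) = d g;
  gd_rd : forall g, r (d g) = d g;
  gd_dr : forall g, d (r g) = r g;
  gd_rr : forall g, r (r g) = r g;
  gd_dmul : forall g h, d g = r h -> d (mul g h) = d h;
  gd_rmul : forall g h, d g = r h -> r (mul g h) = r g;
  gd_assoc : forall g h k, d g = r h -> d h = r k ->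
               mul (mul g h) k = mul g (mul h k);
  gd_lid : forall g, mul (r g) g = g;
  gd_rid : forall g, mul g (d g) = g;
  gd_dinv : forall g, d (inv g) = r g;
  gd_rinv : forall g, r (inv g) = d g;
  gd_invl : forall g, mul (inv g) g = d g;
  gd_invr : forall g, mul g (inv g) = r g }.

Definition is_unit_obj (G : finType) (d : G -> G) (e : G) : Prop := d e = e.

Record kalgebra (K : comPzRingType) (R : lmodType K) (Rmul : R -> R -> R) : Prop := {
  ka_assoc : forall x y z, Rmul (Rmul x y) z = Rmul x (Rmul y z);
  ka_mulDl : forall x y z, Rmul (x + y) z = Rmul x z + Rmul y z;
  ka_mulDr : forall x y z, Rmul x (y + z) = Rmul x y + Rmul x z;
  ka_scalel : forall (c : K) x y, Rmul (c *: x) y = c *: Rmul x y;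
  ka_scaler : forall (c : K) x y, Rmul x (c *: y) = c *: Rmul x y }.

Record ideal (K : comPzRingType) (R : lmodType K) (Rmul : R -> R -> R)
    (I : R -> Prop) : Prop := {
  id_0 : I 0;
  id_sub : forall x y, I x -> I y -> I (x - y);
  id_scale : forall (c : K) x, I x -> I (c *: x);
  id_mull : forall x y, I y -> I (Rmul x y);
  id_mulr : forall x y, I x -> I (Rmul x y) }.

Record action (K : comPzRingType) (R : lmodType K) (Rmul : R -> R -> R)
    (G : finType) (d r inv : G -> G) (mul : G -> G -> G)
    (E : G -> R -> Prop) (beta : G -> R -> R) (one : G -> R) : Prop := {
  ac_Er : forall g, E g = E (r g);
  ac_ideal : forall g, ideal Rmul (E g);
  ac_maps : forall g x, E (inv g) x -> E g (beta g x);
  ac_inj : forall g x y, E (inv g) x -> E (inv g) y -> beta g x = beta g y -> x = y;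
  ac_surj : forall g y, E g y -> exists2 x, E (inv g) x & beta g x = y;
  ac_add : forall g x y, E (inv g) x -> E (inv g) y ->
             beta g (x + y) = beta g x + beta g y;
  ac_scale : forall g (c : K) x, E (inv g) x -> beta g (c *: x) = c *: beta g x;
  ac_mul : forall g x y, E (inv g) x -> E (inv g) y ->
             beta g (Rmul x y) = Rmul (beta g x) (beta g y);
  ac_id : forall e x, is_unit_obj d e -> E e x -> beta e x = x;
  ac_comp : forall g h x, d g = r h -> E (inv h) x ->
             beta g (beta h x) = beta (mul g h) x;
  ac_one_in : forall e, is_unit_obj d e -> E e (one e);
  ac_one_l : forall e x, is_unit_obj d e -> E e x -> Rmul (one e) x = x;
  ac_one_r : forall e x, is_unit_obj d e -> E e x -> Rmul x (one e) = x }.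

(* Elements of B = (R *_beta G) # KG^* are written as
   sum_{g,l} x(g,l) delta_g # v_l, with x(g,l) in E_g. *)
Definition Belt (K : comPzRingType) (R : lmodType K) (G : finType) :=
  {ffun G * G -> R}.

(* Multiplication in B:
   (a delta_g # v_k)(b delta_h # v_l) = a beta_g(b) delta_{gh} # v_l
   if d k = d l, h = k l^{-1} and d g = r h, and 0 otherwise. *)
Definition Bmul (K : comPzRingType) (R : lmodType K) (Rmul : R -> R -> R)
    (G : finType) (d r inv : G -> G) (mul : G -> G -> G) (beta : G -> R -> R)
    (x y : {ffun G * G -> R}) : {ffun G * G -> R} :=
  [ffun p : G * G =>
     \sum_(g : G) \sum_(h : G) \sum_(k : G)
       (if [&& d k == d p.2, h == mul k (inv p.2), d g == r h & mul g h == p.1]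
        then Rmul (x (g, k)) (beta g (y (h, p.2))) else 0)].

(* x lies in B_{e,f} = (+)_{g in G_e, l in T_e cap S_f} E_g delta_g # v_l. *)
Definition inBef (K : comPzRingType) (R : lmodType K)
    (G : finType) (d r : G -> G) (E : G -> R -> Prop) (e f : G)
    (x : {ffun G * G -> R}) : Prop :=
  forall g l, E g (x (g, l)) /\
    (x (g, l) <> 0 -> [/\ d g = e, r g = e, r l = e & d l = f]).

Definition Bone (K : comPzRingType) (R : lmodType K)
    (G : finType) (d r : G -> G) (one : G -> R) (e f : G) : {ffun G * G -> R} :=
  [ffun p : G * G => if [&& p.1 == e, r p.2 == e & d p.2 == f] then one e else 0].

Definition nef (G : finType) (d r : G -> G) (e f : G) : nat :=
  #|[set l : G | (r l == e) && (d l == f)]|.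

Definition inMat (K : comPzRingType) (R : lmodType K) (I : R -> Prop) (n : nat)
    (A : {ffun 'I_n * 'I_n -> R}) : Prop := forall i j, I (A (i, j)).

Definition Mmul (K : comPzRingType) (R : lmodType K) (Rmul : R -> R -> R) (n : nat)
    (A B : {ffun 'I_n * 'I_n -> R}) : {ffun 'I_n * 'I_n -> R} :=
  [ffun p : 'I_n * 'I_n => \sum_(k < n) Rmul (A (p.1, k)) (B (k, p.2))].

Definition Mone (K : comPzRingType) (R : lmodType K) (n : nat) (u : R)
    : {ffun 'I_n * 'I_n -> R} :=
  [ffun p : 'I_n * 'I_n => if p.1 == p.2 then u else 0].

From HB Require Import structures.
From mathcomp Require Import all_boot all_order all_algebra.
Set Implicit Arguments. Unset Strict Implicit. Unset Printing Implicit Defensive.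
Import GRing.Theory.
Local Open Scope ring_scope.

(* Enumerate T_e cap S_f as L_0, ..., L_{n-1} and fix one l0 in it.  The
   index pairs (g, l) with g in G_e and l in T_e cap S_f are exactly the
   pairs (u i j, L j) with u i j := L_i L_j^{-1}; as (u i m)(u m j) = u i j,
   the elements u i j delta # v_{L j} multiply like matrix units.  Since
   E_{u i j} = E_e, the coefficient of such a unit already lies in E_e; to
   make the multiplication rule of B match the matrix product exactly we
   twist the (i,j) entry by beta along the morphism t i := l0 L_i^{-1} of
   G_e, using (t i)(u i m) = t m.  The resulting map

       phi x = ( beta_{t i} (x (u i j, L j)) )_{i,j}

   is a bijection B_{e,f} -> M_n(E_e) respecting sums, scalars, products
   and units. *)

Section GroupoidCancellation.
Variables (G : finType) (d r inv : G -> G) (mul : G -> G -> G).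
Hypothesis HG : groupoid d r inv mul.

Lemma mul_rcancel a a' b : d a = r b -> d a' = r b -> mul a b = mul a' b -> a = a'.
Proof.
move=> Ha Ha' Hab.
have Hb : d b = r (inv b) by rewrite (gd_rinv HG).
rewrite -(gd_rid HG a) -(gd_rid HG a') Ha Ha' -(gd_invr HG b).
by rewrite -!(gd_assoc HG) // Hab.
Qed.

Lemma mul_inv_mid a b c : d a = d b -> d b = r c ->
  mul (mul a (inv b)) (mul b c) = mul a c.
Proof.
move=> Hab Hbc.
have Hc : mul (inv b) (mul b c) = c.
  by rewrite -(gd_assoc HG) ?(gd_dinv HG) // (gd_invl HG) Hbc (gd_lid HG).
by rewrite (gd_assoc HG) ?Hc ?(gd_rinv HG) // (gd_dinv HG) (gd_rmul HG).
Qed.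

Lemma mul_invK a b : d a = d b -> mul (mul a (inv b)) b = a.
Proof.
move=> Hab.
by rewrite (gd_assoc HG) ?(gd_rinv HG) ?(gd_dinv HG) // (gd_invl HG) -Hab (gd_rid HG).
Qed.

Lemma mulK g l : d g = r l -> mul (mul g l) (inv l) = g.
Proof.
by move=> Hgl; rewrite (gd_assoc HG) ?(gd_rinv HG) // (gd_invr HG) -Hgl (gd_rid HG).
Qed.

End GroupoidCancellation.

(* An element equal to its own double is zero; this gives the vanishing of
   additive maps at 0 without assuming they form a structure. *)
Lemma double_eq0 (V : zmodType) (x : V) : x = x + x -> x = 0.
Proof. by move=> Hx; apply: (@addrI _ x); rewrite addr0 -Hx. Qed.

Lemma sum_neq0_term (V : zmodType) (I : finType) (F : I -> V) :
  \sum_(i : I) F i != 0 -> exists i, F i != 0.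
Proof.
move=> Hs; case: (pickP (fun i => F i != 0)) => [i Hi | H0]; first by exists i.
by move: Hs; rewrite big1 ?eqxx // => i _; apply/eqP/negbFE/H0.
Qed.

Section AlgebraFacts.
Variables (K : comPzRingType) (R : lmodType K) (Rmul : R -> R -> R).
Hypothesis HR : kalgebra Rmul.

Lemma Rmul0l y : Rmul 0 y = 0.
Proof. by apply: double_eq0; rewrite -(ka_mulDl HR) addr0. Qed.

Lemma Rmul0r y : Rmul y 0 = 0.
Proof. by apply: double_eq0; rewrite -(ka_mulDr HR) addr0. Qed.

End AlgebraFacts.

Section IdealClosure.
Variables (K : comPzRingType) (R : lmodType K) (Rmul : R -> R -> R) (I : R -> Prop).
Hypothesis HI : ideal Rmul I.

Lemma ideal_opp x : I x -> I (- x).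
Proof. by move=> Hx; rewrite -sub0r; apply: (id_sub HI) => //; apply: (id_0 HI). Qed.

Lemma ideal_add x y : I x -> I y -> I (x + y).
Proof. by move=> Hx Hy; rewrite -[y]opprK; apply: (id_sub HI) => //; apply: ideal_opp. Qed.

Lemma ideal_sum (J : finType) (P : pred J) (F : J -> R) :
  (forall j, P j -> I (F j)) -> I (\sum_(j | P j) F j).
Proof. by move=> HF; apply: (big_ind I); [exact: (id_0 HI) | exact: ideal_add |]. Qed.

End IdealClosure.

Section ActionFacts.
Variables (K : comPzRingType) (R : lmodType K) (Rmul : R -> R -> R)
  (G : finType) (d r inv : G -> G) (mul : G -> G -> G)
  (E : G -> R -> Prop) (beta : G -> R -> R) (one : G -> R).
Hypotheses (HG : groupoid d r inv mul) (Hact : action Rmul d r inv mul E beta one).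

Lemma E0 g : E g 0. Proof. exact: (id_0 (ac_ideal Hact g)). Qed.

Lemma beta0 g : beta g 0 = 0.
Proof. by apply: double_eq0; rewrite -(ac_add Hact) ?addr0 //; apply: E0. Qed.

Lemma beta_sum g (J : finType) (P : pred J) (F : J -> R) :
  (forall j, P j -> E (inv g) (F j)) ->
  beta g (\sum_(j | P j) F j) = \sum_(j | P j) beta g (F j).
Proof.
move=> HF.
suff [] : E (inv g) (\sum_(j | P j) F j) /\
   beta g (\sum_(j | P j) F j) = \sum_(j | P j) beta g (F j) by [].
apply: (big_rec2 (fun y1 y2 => E (inv g) y1 /\ beta g y1 = y2)).
  by split; [exact: E0 | exact: beta0].
move=> j y1 y2 Pj [Hy1 <-]; split; first by apply: (ideal_add (ac_ideal Hact _)) => //; apply: HF.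
by rewrite (ac_add Hact) //; apply: HF.
Qed.

(* A ring isomorphism beta_s of E_e onto itself (s in G_e) fixes the
   identity 1_e. *)
Lemma beta_one e s : d e = e -> d s = e -> r s = e -> beta s (one e) = one e.
Proof.
move=> He Hd Hr.
have Einv : E (inv s) = E e by rewrite (ac_Er Hact) (gd_rinv HG) Hd.
have Es : E s = E e by rewrite (ac_Er Hact) Hr.
have E1 : E e (one e) := ac_one_in Hact He.
have Ebeta : E e (beta s (one e)) by rewrite -Es; apply: (ac_maps Hact); rewrite Einv.
have [z Ez Hz] : exists2 z, E (inv s) z & beta s z = one e by apply: (ac_surj Hact); rewrite Es.
have Eez : E e z by rewrite -Einv.
rewrite -[LHS](ac_one_r Hact He Ebeta) -{2}Hz -(ac_mul Hact) ?Einv //.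
by rewrite (ac_one_l Hact He).
Qed.

End ActionFacts.

Section MatrixUnits.
Variables (K : comPzRingType) (R : lmodType K) (Rmul : R -> R -> R)
  (G : finType) (d r inv : G -> G) (mul : G -> G -> G)
  (E : G -> R -> Prop) (beta : G -> R -> R) (one : G -> R).
Hypotheses (HR : kalgebra Rmul) (HG : groupoid d r inv mul)
  (Hact : action Rmul d r inv mul E beta one).
Variables (e f l0 : G).
Hypotheses (He : d e = e) (l0_r : r l0 = e) (l0_d : d l0 = f).

Local Notation Bef := (inBef d r E e f).
Local Notation bmul := (Bmul Rmul d r inv mul beta).

Lemma e_r : r e = e.
Proof. by rewrite -{1}He (gd_rd HG). Qed.

Definition Tef : {set G} := [set l : G | (r l == e) && (d l == f)].
Local Notation n := #|Tef|.

Lemma in_Tef l : (l \in Tef) = (r l == e) && (d l == f).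
Proof. by rewrite inE. Qed.

Lemma l0_in_Tef : l0 \in Tef.
Proof. by rewrite in_Tef l0_r l0_d !eqxx. Qed.

Definition L (i : 'I_n) : G := enum_val i.
Definition rankL (l : G) : 'I_n := enum_rank_in l0_in_Tef l.

Lemma L_r i : r (L i) = e.
Proof. by have := enum_valP i; rewrite in_Tef => /andP[/eqP]. Qed.

Lemma L_d i : d (L i) = f.
Proof. by have := enum_valP i; rewrite in_Tef => /andP[_ /eqP]. Qed.

Lemma rankLK i : rankL (L i) = i.
Proof. exact: enum_valK_in. Qed.

Lemma LrankK l : l \in Tef -> L (rankL l) = l.
Proof. exact: enum_rankK_in. Qed.

Definition u i j : G := mul (L i) (inv (L j)).
Definition t i : G := mul l0 (inv (L i)).

Lemma u_d i j : d (u i j) = e.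
Proof. by rewrite (gd_dmul HG) ?(gd_dinv HG) ?L_r // (gd_rinv HG) !L_d. Qed.

Lemma u_r i j : r (u i j) = e.
Proof. by rewrite (gd_rmul HG) ?L_r // (gd_rinv HG) !L_d. Qed.

Lemma t_d i : d (t i) = e.
Proof. by rewrite (gd_dmul HG) ?(gd_dinv HG) ?L_r // (gd_rinv HG) L_d. Qed.

Lemma t_r i : r (t i) = e.
Proof. by rewrite (gd_rmul HG) // (gd_rinv HG) L_d. Qed.

Lemma t_mul i m : mul (t i) (u i m) = t m.
Proof. by rewrite (mul_inv_mid HG) ?(gd_rinv HG) ?L_d. Qed.

Lemma u_L i j : mul (u i j) (L j) = L i.
Proof. by rewrite (mul_invK HG) ?L_d. Qed.

Lemma E_r g : r g = e -> E g = E e.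
Proof. by move=> Hg; rewrite (ac_Er Hact) Hg. Qed.

Lemma E_inv g : d g = e -> E (inv g) = E e.
Proof. by move=> Hg; rewrite (ac_Er Hact) (gd_rinv HG) Hg. Qed.

Lemma support_units g l : d g = e -> r g = e -> r l = e -> d l = f ->
  exists i j, L j = l /\ u i j = g.
Proof.
move=> Hdg Hrg Hrl Hdl.
have lT : l \in Tef by rewrite in_Tef Hrl Hdl !eqxx.
have glT : mul g l \in Tef.
  by rewrite in_Tef (gd_rmul HG) ?(gd_dmul HG) ?Hrg ?Hdl ?Hrl ?Hdg ?eqxx.
exists (rankL (mul g l)), (rankL l).
by rewrite /u !LrankK // (mulK HG) // Hdg Hrl.
Qed.

Lemma Bef_coef x g l : Bef x -> r g = e -> E e (x (g, l)).
Proof. by move=> Hx Hg; case: (Hx g l); rewrite E_r. Qed.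

Lemma Bef_unit_coef x i j : Bef x -> E e (x (u i j, L j)).
Proof. by move=> Hx; apply: Bef_coef => //; apply: u_r. Qed.

Lemma Bmul_closed x y : Bef x -> Bef y -> Bef (bmul x y).
Proof.
move=> Hx Hy g0 l; rewrite ffunE /=; split.
  apply: (ideal_sum (ac_ideal Hact g0)) => g _.
  apply: (ideal_sum (ac_ideal Hact g0)) => h _.
  apply: (ideal_sum (ac_ideal Hact g0)) => k _.
  case: ifP => [/and4P[_ _ /eqP Hgh /eqP <-] | _]; last exact: (E0 Hact).
  rewrite (ac_Er Hact) (gd_rmul HG) // -(ac_Er Hact).
  by apply: (id_mulr (ac_ideal Hact g)); case: (Hx g k).
move=> /eqP /sum_neq0_term [g /sum_neq0_term [h /sum_neq0_term [k]]].
case: ifP => [/and4P[_ _ /eqP Hgh /eqP <-] | _]; last by rewrite eqxx.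
have [Hxk|/eqP Hxk] := eqVneq (x (g, k)) 0; first by rewrite Hxk (Rmul0l HR) ?eqxx.
have [Hyl|/eqP Hyl] := eqVneq (y (h, l)) 0; first by rewrite Hyl (beta0 Hact) (Rmul0r HR) ?eqxx.
move=> _; have [Hdg Hrg _ _] := proj2 (Hx g k) Hxk.
have [Hdh Hrh Hrl Hdl] := proj2 (Hy h l) Hyl.
by rewrite (gd_dmul HG) // (gd_rmul HG).
Qed.

Lemma Bone_in : Bef (Bone d r one e f).
Proof.
move=> g l; rewrite ffunE /=; case: ifP => [/and3P[/eqP -> /eqP Hr /eqP Hd] | _].
  by split; [apply: (ac_one_in Hact) | rewrite e_r].
by split; [apply: (E0 Hact) |].
Qed.

Definition phi (x : {ffun G * G -> R}) : {ffun 'I_n * 'I_n -> R} :=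
  [ffun p => beta (t p.1) (x (u p.1 p.2, L p.2))].

Lemma phi_mat x : Bef x -> inMat (E e) (phi x).
Proof.
move=> Hx i j; rewrite ffunE /= -(E_r (t_r i)); apply: (ac_maps Hact).
by rewrite E_inv ?t_d //; apply: Bef_unit_coef.
Qed.

Lemma phi_inj x y : Bef x -> Bef y -> phi x = phi y -> x = y.
Proof.
move=> Hx Hy Hxy; apply/ffunP => -[g l].
have agree : [/\ d g = e, r g = e, r l = e & d l = f] -> x (g, l) = y (g, l).
  case=> Hdg Hrg Hrl Hdl; have [i [j [<- <-]]] := support_units Hdg Hrg Hrl Hdl.
  move/ffunP: Hxy => /(_ (i, j)); rewrite !ffunE /=.
  by apply: (ac_inj Hact); rewrite E_inv ?t_d //; apply: Bef_unit_coef.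
have [Hx0|/eqP Hxn] := eqVneq (x (g, l)) 0; last exact/agree/(proj2 (Hx g l)).
have [Hy0|/eqP Hyn] := eqVneq (y (g, l)) 0; last exact/agree/(proj2 (Hy g l)).
by rewrite Hx0 Hy0.
Qed.

(* The inverse of phi: the entry (i, j) of A is transported back along
   (t i)^{-1} and placed at the matrix unit (u i j, L j). *)
Definition unphi (A : {ffun 'I_n * 'I_n -> R}) : {ffun G * G -> R} :=
  [ffun p : G * G =>
     if [&& d p.1 == e, r p.1 == e & p.2 \in Tef] then
       beta (inv (t (rankL (mul p.1 p.2)))) (A (rankL (mul p.1 p.2), rankL p.2))
     else 0].

Lemma unphi_in A : inMat (E e) A -> Bef (unphi A).
Proof.
move=> HA g l; rewrite ffunE /=; case: ifP => [/and3P[/eqP Hd /eqP Hr lT] | _].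
  split; last by move: lT; rewrite in_Tef => /andP[/eqP ? /eqP ?].
  rewrite E_r // -(E_inv (t_d (rankL (mul g l)))); apply: (ac_maps Hact).
  by rewrite E_inv ?(gd_dinv HG) ?t_r.
by split; [apply: (E0 Hact) |].
Qed.

Lemma phi_unphi A : inMat (E e) A -> phi (unphi A) = A.
Proof.
move=> HA; apply/ffunP => -[i j].
rewrite !ffunE /= u_d u_r enum_valP !eqxx /= u_L !rankLK.
have EA : E (inv (inv (t i))) (A (i, j)) by rewrite E_inv ?(gd_dinv HG) ?t_r.
rewrite (ac_comp Hact) ?(gd_rinv HG) // (gd_invr HG) t_r (ac_id Hact) //.
Qed.

Lemma phi_surj A : inMat (E e) A -> exists2 x, Bef x & phi x = A.
Proof. by move=> HA; exists (unphi A); [apply: unphi_in | apply: phi_unphi]. Qed.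

Lemma phiD x y : Bef x -> Bef y -> phi (x + y) = phi x + phi y.
Proof.
move=> Hx Hy; apply/ffunP => -[i j]; rewrite !ffunE /=.
by rewrite (ac_add Hact) // E_inv ?t_d //; apply: Bef_unit_coef.
Qed.

Lemma phiZ (c : K) x : Bef x -> phi (c *: x) = c *: phi x.
Proof.
move=> Hx; apply/ffunP => -[i j]; rewrite !ffunE /=.
by rewrite (ac_scale Hact) // E_inv ?t_d //; apply: Bef_unit_coef.
Qed.

(* The matrix unit (u i i, L i) = (e, L i) carries 1_e and the others carry 0,
   since u i j = e forces L i = L j. *)
Lemma phi_one : phi (Bone d r one e f) = Mone n (one e).
Proof.
apply/ffunP => -[i j]; rewrite !ffunE /= L_r L_d !eqxx !andbT.
have [<-|Hij] := eqVneq i j.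
  by rewrite /u (gd_invr HG) L_r eqxx (beta_one HG Hact) ?t_d ?t_r.
suff /negbTE -> : u i j != e by rewrite (beta0 Hact).
apply: contra_neq Hij => Huij.
by rewrite -(rankLK i) -(rankLK j) -(u_L i j) Huij -(L_r j) (gd_lid HG).
Qed.

(* The contribution of an intermediate index k to the (u i j, L j)
   coefficient of a product: only g = L_i k^{-1} and h = k L_j^{-1}
   can pair with it. *)
Definition unit_term (x y : {ffun G * G -> R}) i j (k : G) : R :=
  Rmul (x (mul (L i) (inv k), k)) (beta (mul (L i) (inv k)) (y (mul k (inv (L j)), L j))).

Lemma Bmul_coord_term (x y : {ffun G * G -> R}) i j k : Bef x ->
  \sum_(g : G) \sum_(h : G)
     (if [&& d k == d (L j), h == mul k (inv (L j)), d g == r h & mul g h == u i j]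
      then Rmul (x (g, k)) (beta g (y (h, L j))) else 0)
  = if k \in Tef then unit_term x y i j k else 0.
Proof.
move=> Hx; set h0 := mul k (inv (L j)).
rewrite (eq_bigr (fun g => if [&& d k == d (L j), true, d g == r h0 & mul g h0 == u i j]
    then Rmul (x (g, k)) (beta g (y (h0, L j))) else 0)); last first.
  move=> g _; rewrite (bigD1 h0) //= eqxx big1 ?addr0 // => h /negbTE Hh.
  by rewrite Hh andbF.
case: (boolP (k \in Tef)) => kT; last first.
  apply: big1 => g _; case: ifP => // _.
  have [->|/eqP Hxn] := eqVneq (x (g, k)) 0; first by rewrite (Rmul0l HR).
  have [_ _ Hrk Hdk] := proj2 (Hx g k) Hxn.
  by move: kT; rewrite in_Tef Hrk Hdk !eqxx.
have /andP[/eqP Hrk /eqP Hdk] : (r k == e) && (d k == f) by rewrite -in_Tef.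
set g0 := mul (L i) (inv k).
have Hg0 : d g0 = e by rewrite (gd_dmul HG) ?(gd_dinv HG) // (gd_rinv HG) L_d.
have Hh0 : r h0 = e by rewrite (gd_rmul HG) // (gd_rinv HG) L_d.
have Hm0 : mul g0 h0 = u i j by rewrite (mul_inv_mid HG) ?(gd_rinv HG) ?L_d.
rewrite (bigD1 g0) //= Hdk L_d Hg0 Hh0 Hm0 !eqxx /= big1 ?addr0 //.
move=> g /negbTE Hg; case: ifP => // /andP[/eqP Hgh /eqP Hm].
suff Hgg : g = g0 by rewrite Hgg eqxx in Hg.
by apply: (mul_rcancel HG (b := h0)); rewrite ?Hgh ?Hg0 ?Hh0 ?Hm ?Hm0.
Qed.

Lemma Bmul_coord x y i j : Bef x ->
  bmul x y (u i j, L j) = \sum_(m < n) unit_term x y i j (L m).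
Proof.
move=> Hx; rewrite ffunE /=.
under eq_bigr => g _ do rewrite exchange_big.
rewrite exchange_big (eq_bigr _ (fun k _ => Bmul_coord_term y i j k Hx)) -big_mkcond /=.
exact: big_enum_val.
Qed.

(* phi is multiplicative: twisting the coefficient formula by t i and
   using (t i)(u i m) = t m gives the matrix product. *)
Lemma phiM x y : Bef x -> Bef y -> phi (bmul x y) = Mmul Rmul (phi x) (phi y).
Proof.
move=> Hx Hy; apply/ffunP => -[i j].
rewrite [phi _ _]ffunE [Mmul _ _ _ _]ffunE /= Bmul_coord //.
have Et := E_inv (t_d i).
rewrite (beta_sum Hact) => [|m _]; last first.
  by rewrite Et; apply: (id_mulr (ac_ideal Hact e)); apply: Bef_unit_coef.
apply: eq_bigr => m _; rewrite !ffunE /=.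
have Eum : E e (beta (u i m) (y (u m j, L j))).
  by rewrite -(E_r (u_r i m)); apply: (ac_maps Hact); rewrite E_inv ?u_d //; apply: Bef_unit_coef.
rewrite /unit_term -/(u i m) -/(u m j) (ac_mul Hact) ?Et //; last exact: Bef_unit_coef.
by rewrite (ac_comp Hact) ?t_d ?u_r ?E_inv ?u_d ?t_mul //; apply: Bef_unit_coef.
Qed.

End MatrixUnits.

Theorem proposition3p6
  (K : comPzRingType) (R : lmodType K) (Rmul : R -> R -> R)
  (G : finType) (d r inv : G -> G) (mul : G -> G -> G)
  (E : G -> R -> Prop) (beta : G -> R -> R) (one : G -> R)
  (HR : kalgebra Rmul) (HG : groupoid d r inv mul)
  (Hact : action Rmul d r inv mul E beta one)
  (e f : G) (He : is_unit_obj d e) (Hf : is_unit_obj d f)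
  (Hne : exists l : G, r l = e /\ d l = f) :
  exists phi : {ffun G * G -> R} -> {ffun 'I_(nef d r e f) * 'I_(nef d r e f) -> R},
    (* B_{e,f} is closed under the product of B and contains the stated identity; *)
    and
      (forall x y, inBef d r E e f x -> inBef d r E e f y ->
         inBef d r E e f (Bmul Rmul d r inv mul beta x y))
      (inBef d r E e f (Bone d r one e f)) /\
    (* phi restricts to a bijection B_{e,f} -> M_n(E_e) ... *)
    and
      [/\ forall x, inBef d r E e f x -> inMat (E e) (phi x),
           forall x y, inBef d r E e f x -> inBef d r E e f y -> phi x = phi y -> x = y
         & forall A, inMat (E e) A -> exists2 x, inBef d r E e f x & phi x = A]
    (* ... which is a unital K-algebra homomorphism *)
      [/\ forall x y, inBef d r E e f x -> inBef d r E e f y -> phi (x + y) = phi x + phi y,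
          forall (c : K) x, inBef d r E e f x -> phi (c *: x) = c *: phi x,
          forall x y, inBef d r E e f x -> inBef d r E e f y ->
            phi (Bmul Rmul d r inv mul beta x y) = Mmul Rmul (phi x) (phi y)
        & phi (Bone d r one e f) = Mone (nef d r e f) (one e)].
Proof.
have [l0 [l0_r l0_d]] := Hne.
exists (phi d r inv mul beta e f l0); split; [split | split; [split | split]].
- exact: (Bmul_closed HR HG Hact).
- exact: (Bone_in HG Hact).
- exact: (phi_mat HG Hact l0_r l0_d).
- exact: (phi_inj HG Hact l0_r l0_d).
- exact: (phi_surj HG Hact He l0_r l0_d).
- exact: (phiD HG Hact l0_d).
- exact: (phiZ HG Hact l0_d).
- exact: (phiM HR HG Hact l0_d).
- exact: (phi_one HG Hact He l0_r l0_d).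
Qed.
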